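(* Let $\omega\in\mathbb{F}_8$ be a root of $y^3+y+1$, let $m\in\mathbb{N}$, and let $L,M,N$ be nonempty subsets of $[m]$, at least one of which is a proper subset of $[m]$. Let $D=\Delta_L+\omega\Delta_M+\omega^2\Delta_N\subseteq\mathbb{F}_8^m$, $D^c=\mathbb{F}_8^m\setminus D$, and $s=|L|+|M|+|N|$. Then the binary code $C^{(2)}_{D^c}=\{((\alpha,\beta,\gamma)\cdot x)_{x\in(D^c)^{(2)}}:\alpha,\beta,\gamma\in\mathbb{F}_2^m\}$, where $(D^c)^{(2)}=\{(a,c,b)\in(\mathbb{F}_2^m)^3: a+\omega b+\omega^2c\in D^c\}$, is a $[2^{3m}-2^s,\,3m,\,2^{3m-1}-2^{s-1}]$ binary $2$-weight linear code with weight distribution: $1$ codeword of weight $0$, $2^{3m-s}(2^s-1)$ codewords of weight $2^{3m-1}-2^{s-1}$, and $2^{3m-s}-1$ codewords of weight $2^{3m-1}$. Moreover, it is a Griesmer code and hence distance optimal. Further, if $s\le 3m-2$ then $C^{(2)}_{D^c}$ is a minimal code.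
   Context: $[m]=\{1,\dots,m\}$; $\Delta_L=\{w\in\mathbb{F}_2^m:\{i:w_i\ne0\}\subseteq L\}$; $A+\omega B+\omega^2C=\{a+\omega b+\omega^2c: a\in A,b\in B,c\in C\}$. (This code is the subfield code, with respect to the basis $\{1,\omega,\omega^2\}$, of the octanary code $C_{D^c}=\{(v\cdot d)_{d\in D^c}:v\in\mathbb{F}_8^m\}$.) A $2$-weight code has exactly two distinct nonzero Hamming weights. An $[n,k,d]$ code over $\mathbb{F}_q$ is Griesmer if $\sum_{i=0}^{k-1}\lceil d/q^i\rceil=n$, distance optimal if no $[n,k,d+1]$ linear code exists, and minimal if for every nonzero codeword $c$, each nonzero codeword $c'$ with $\mathrm{Supp}(c')\subseteq\mathrm{Supp}(c)$ is a scalar multiple of $c$. *)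

From HB Require Import structures.
From mathcomp Require Import all_boot all_order all_algebra.
Set Implicit Arguments. Unset Strict Implicit. Unset Printing Implicit Defensive.
Import GRing.Theory.
Local Open Scope ring_scope.

Definition supp (K : fieldType) (n : nat) (v : 'rV[K]_n) : {set 'I_n} :=
  [set i | v 0 i != 0].
Definition wt (K : fieldType) (n : nat) (v : 'rV[K]_n) : nat := #|supp v|.

Definition min_dist_is (K : finFieldType) (n : nat) (C : {vspace 'rV[K]_n}) (d : nat)
  : Prop :=
  (exists2 c, c \in C & (c != 0) && (wt c == d)) /\
  (forall c, c \in C -> c != 0 -> (d <= wt c)%N).

Definition is_nkd_code (K : finFieldType) (n k d : nat) (C : {vspace 'rV[K]_n}) : Prop :=
  \dim C = k /\ min_dist_is C d.

Definition num_wt (K : finFieldType) (n : nat) (C : {vspace 'rV[K]_n}) (w : nat) : nat :=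
  #|[set c : 'rV[K]_n | (c \in C) && (wt c == w)]|.

Definition two_weight (K : finFieldType) (n : nat) (C : {vspace 'rV[K]_n}) : Prop :=
  exists w1 w2 : nat, w1 <> w2 /\
    (exists2 c, c \in C & (c != 0) && (wt c == w1)) /\
    (exists2 c, c \in C & (c != 0) && (wt c == w2)) /\
    (forall c, c \in C -> c != 0 -> wt c = w1 \/ wt c = w2).

Definition ceil_div (a b : nat) : nat := ((a + b - 1) %/ b)%N.

Definition griesmer (K : finFieldType) (n : nat) (C : {vspace 'rV[K]_n}) : Prop :=
  exists d, min_dist_is C d /\
    (\sum_(i < \dim C) ceil_div d (#|K| ^ i))%N = n.

Definition distance_optimal (K : finFieldType) (n : nat) (C : {vspace 'rV[K]_n}) : Prop :=
  exists d, is_nkd_code (\dim C) d C /\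
    ~ (exists C' : {vspace 'rV[K]_n}, is_nkd_code (\dim C) d.+1 C').

Definition minimal_code (K : finFieldType) (n : nat) (C : {vspace 'rV[K]_n}) : Prop :=
  forall c c', c \in C -> c' \in C -> c != 0 -> c' != 0 ->
    supp c' \subset supp c -> exists a : K, c' = a *: c.

Definition Delta (m : nat) (L : {set 'I_m}) : {set 'rV['F_2]_m} :=
  [set w | supp w \subset L].

Definition embF (F : fieldType) (m : nat) (w : 'rV['F_2]_m) : 'rV[F]_m :=
  map_mx (fun x : 'F_2 => (nat_of_ord x)%:R) w.

Definition Dset (F : finFieldType) (om : F) (m : nat) (L M N : {set 'I_m})
  : {set 'rV[F]_m} :=
  [set x | [exists a in Delta L, exists b in Delta M, exists c in Delta N,
             x == embF F a + om *: embF F b + om ^+ 2 *: embF F c]].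

Definition triple (m : nat) := ('rV['F_2]_m * 'rV['F_2]_m * 'rV['F_2]_m)%type.

(* (D^c)^(2) = {(a,c,b) : a + om b + om^2 c in D^c}; a triple x = ((a,c),b) *)
Definition Dc2 (F : finFieldType) (om : F) (m : nat) (L M N : {set 'I_m})
  : {set triple m} :=
  [set x : triple m | embF F x.1.1 + om *: embF F x.2 + om ^+ 2 *: embF F x.1.2
                        \notin Dset om L M N].

Definition dotv (m : nat) (u v : 'rV['F_2]_m) : 'F_2 := \sum_i u 0 i * v 0 i.

(* (alpha,beta,gamma).(a,c,b) with u = ((alpha,beta),gamma), x = ((a,c),b) *)
Definition dot3 (m : nat) (u x : triple m) : 'F_2 :=
  dotv u.1.1 x.1.1 + dotv u.1.2 x.1.2 + dotv u.2 x.2.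

Definition cwD2 (F : finFieldType) (om : F) (m : nat) (L M N : {set 'I_m}) (u : triple m)
  : 'rV['F_2]_#|Dc2 om L M N| :=
  \row_(i < #|Dc2 om L M N|) dot3 u (enum_val i).

Definition CD2 (F : finFieldType) (om : F) (m : nat) (L M N : {set 'I_m})
  : {vspace 'rV['F_2]_#|Dc2 om L M N|} :=
  <<[seq cwD2 om L M N u | u : triple m]>>%VS.

(* Since 1, om, om^2 are linearly independent over F_2, (D^c)^(2) is the complement in
   F_2^(3m) of the subgroup D^(2) = Delta_L x Delta_N x Delta_M, of order 2^s.  For u <> 0
   the form x |-> u.x is 1 on half of F_2^(3m), and on D^(2) it is 1 either nowhere (when u
   lies in the annihilator Delta_(~L) x Delta_(~N) x Delta_(~M), of order 2^(3m-s)) or on half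
   of it.  This gives the two weights 2^(3m-1) and 2^(3m-1) - 2^(s-1) with their frequencies,
   and shows u |-> c_u injective, so the dimension is 3m.  The Griesmer identity is
   arithmetic, distance optimality follows from the Plotkin average-weight bound, and
   minimality from the Ashikhmin-Barg criterion w_max < 2 w_min. *)

From HB Require Import structures.
From mathcomp Require Import all_boot all_order all_algebra all_field zify ring.
Set Implicit Arguments. Unset Strict Implicit.
Import GRing.Theory.

Lemma ceil_div_subn q A B : 0 < q -> q %| A -> B <= A ->
  ceil_div (A - B) q = A %/ q - B %/ q.
Proof.
move=> q_gt0 /dvdnP[a ->] leBA; rewrite /ceil_div mulnK //.
have Bq := divn_eq B q; have ltrq := ltn_pmod B q_gt0.
set b := B %/ q in Bq *; set r := B %% q in Bq ltrq *.
have le_ba : b <= a by rewrite -(leq_pmul2r q_gt0); lia.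
have -> : a * q - B + q - 1 = (a - b) * q + (q - 1 - r) by rewrite mulnBl; lia.
by rewrite divnMDl // divn_small ?addn0 //; lia.
Qed.

Lemma sum_exp2_div t k : t < k -> \sum_(i < k) 2 ^ t %/ 2 ^ i = 2 ^ t.+1 - 1.
Proof.
elim: k t => [|k IHk] [|t] // lttk; rewrite big_ord_recl expn0 divn1.
  by rewrite big1 // => i _; rewrite divn_small // expnS; have := expn_gt0 2 i; lia.
under eq_bigr => i _ do rewrite lift0 !expnS divnMl //.
by rewrite IHk // [2 ^ t.+2]expnS; have := expn_gt0 2 t.+1; lia.
Qed.

Lemma sum_ceil_div_exp2 k s : 0 < s < k ->
  \sum_(i < k) ceil_div (2 ^ (k - 1) - 2 ^ (s - 1)) (2 ^ i) = 2 ^ k - 2 ^ s.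
Proof.
move=> /andP[s_gt0 ltsk].
have le_sk i : 2 ^ (s - 1) %/ 2 ^ i <= 2 ^ (k - 1) %/ 2 ^ i.
  by rewrite leq_div2r // leq_exp2l //; lia.
rewrite (eq_bigr (fun i : 'I_k => 2 ^ (k - 1) %/ 2 ^ i - 2 ^ (s - 1) %/ 2 ^ i)).
  rewrite sumnB // !sum_exp2_div; try lia.
  by rewrite !subn1 !prednK ?subnBr ?subnK //; lia.
move=> i _; have lt_ik := ltn_ord i.
by rewrite ceil_div_subn ?expn_gt0 // ?leq_exp2l ?dvdn_exp2l //; lia.
Qed.

Local Open Scope ring_scope.

Lemma pchar_F2 : 2%N \in [pchar 'F_2].
Proof. exact: pchar_Fp. Qed.

Lemma F2_cases (x : 'F_2) : x = 0 \/ x = 1.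
Proof. by case: x => [[|[|k]] // lt_k2]; [left|right]; apply: val_inj. Qed.

Lemma F2_neq0 (x : 'F_2) : (x != 0) = (x == 1).
Proof. by case: (F2_cases x) => ->. Qed.

(* The library gives products of finite Z-modules both structures but not their join. *)
HB.instance Definition _ (U V : finZmodType) := GRing.Zmodule.on (U * V)%type.

Section AdditiveFormF2.
Variables (T : finZmodType) (phi : T -> 'F_2) (S : {pred T}).
Hypothesis phiD : {morph phi : x y / x + y}.
Hypothesis S_addr : {in S &, forall x y, x + y \in S}.

Lemma double_card_form_neq0 :
  #|[set x in S | phi x != 0]|.*2 = if [exists x in S, phi x != 0] then #|S| else 0%N.
Proof.
case: ifPn => [/exists_inP[x0 x0S]|]; last first.
  rewrite negb_exists_in => /forall_inP S0; apply/eqP; rewrite double_eq0 cards_eq0.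
  by apply/eqP/setP => x; rewrite !inE; apply/negbTE/andP => -[/S0/negP].
rewrite F2_neq0 => /eqP phix0.
set S1 := [set x in S | _]; set S0 := [set x in S | phi x == 0].
have shift (A B : {set T}) : {in A, forall x, x + x0 \in B} -> (#|A| <= #|B|)%N.
  move=> AB; rewrite -(card_imset _ (addIr x0)).
  by apply/subset_leq_card/subsetP => _ /imsetP[x xA ->]; apply: AB.
have le10 : (#|S1| <= #|S0|)%N.
  apply: shift => x; rewrite !inE F2_neq0 => /andP[xS /eqP phix].
  by rewrite S_addr // phiD phix phix0 (addrr_pchar2 pchar_F2).
have le01 : (#|S0| <= #|S1|)%N.
  apply: shift => x; rewrite !inE => /andP[xS /eqP phix].
  by rewrite S_addr // phiD phix phix0 add0r.
have <- : (#|S0| + #|S1|)%N = #|S|.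
  rewrite -[#|S|]cardsE -(cardsID [set x | phi x == 0] [set x in S]).
  by congr (_ + _)%N; apply: eq_card => x; rewrite !inE andbC.
lia.
Qed.

Lemma double_card_form_neq0_le : (#|[set x in S | phi x != 0%R]|.*2 <= #|S|)%N.
Proof. by rewrite double_card_form_neq0; case: ifP. Qed.

End AdditiveFormF2.

Section BinaryCodes.
Variable n : nat.
Implicit Types (C : {vspace 'rV['F_2]_n}) (c : 'rV['F_2]_n).

Lemma card_vspace_F2 C : #|C| = (2 ^ \dim C)%N.
Proof. by rewrite card_vspace card_Fp. Qed.

Lemma wt_eq0 c : (wt c == 0%N) = (c == 0).
Proof.
rewrite cards_eq0; apply/eqP/eqP => [/setP c0|->]; last by apply/setP => i; rewrite !inE mxE eqxx.
by apply/rowP => i; apply/eqP; move: (c0 i); rewrite !inE mxE => /negbFE.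
Qed.

Lemma wt0 : wt (0 : 'rV['F_2]_n) = 0%N.
Proof. by apply/eqP; rewrite wt_eq0. Qed.

Lemma exists_num_wt_gt0 C w : (0 < w)%N -> (0 < num_wt C w)%N ->
  exists2 c, c \in C & (c != 0) && (wt c == w).
Proof.
move=> w_gt0; rewrite card_gt0 => /set0Pn[c]; rewrite inE => /andP[cC /eqP wc].
by exists c; rewrite // wc eqxx andbT -wt_eq0 wc -lt0n.
Qed.

Lemma sum_wt_le C : ((\sum_(c in C) wt c).*2 <= n * #|C|)%N.
Proof.
have wtE c : wt c = (\sum_i (c 0%R i != 0%R))%N.
  by rewrite /wt /supp -sum1dep_card big_mkcond.
under eq_bigr => c _ do rewrite wtE.
rewrite exchange_big /= -mul2n big_distrr -[n in (_ <= n * _)%N]card_ord -sum_nat_const.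
apply: leq_sum => i _; rewrite /= mul2n -big_mkcondr sum1dep_card.
apply: (@double_card_form_neq0_le _ (fun c => c 0 i) C) => [c1 c2|]; first by rewrite mxE.
exact: memvD.
Qed.

Lemma plotkin_bound C d : (forall c, c \in C -> c != 0 -> (d <= wt c)%N) ->
  (((2 ^ \dim C - 1) * d).*2 <= n * 2 ^ \dim C)%N.
Proof.
move=> wt_ge; rewrite -card_vspace_F2; apply: leq_trans (sum_wt_le C); rewrite leq_double.
rewrite (bigD1 0) ?mem0v //= (cardD1 0) mem0v add1n subn1 /= -sum_nat_const.
apply: leq_trans _ (leq_addl _ _); rewrite big_mkcond [X in (_ <= X)%N]big_mkcond.
by apply: leq_sum => c _; rewrite !inE andbC; case: ifP => // /andP[cC cn0]; apply: wt_ge.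
Qed.

Lemma wt_suppD c c' : supp c' \subset supp c -> wt c = (wt (c - c') + wt c')%N.
Proof.
move=> sc'c; rewrite /wt; have -> : supp (c - c') = supp c :\: supp c'.
  apply/setP => i; have := subsetP sc'c i; rewrite !inE !mxE !F2_neq0 (GRing.subr_pchar2 pchar_F2).
  case: (F2_cases (c 0 i)) => ->; case: (F2_cases (c' 0 i)) => ->;
    rewrite ?addr0 ?add0r ?(addrr_pchar2 pchar_F2) ?eqxx ?(oner_eq0, eq_sym 0 1) //.
  by move/(_ isT).
by rewrite -(cardsID (supp c') (supp c)) (setIidPr sc'c) addnC.
Qed.

Lemma minimal_code_wt_bounds C d w :
  (forall c, c \in C -> c != 0 -> (d <= wt c <= w)%N) -> (w < d.*2)%N -> minimal_code C.
Proof.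
move=> wt_in lt_w_2d c c' cC c'C cn0 c'n0 sc'c; exists 1; rewrite scale1r.
apply/eqP; rewrite eq_sym -subr_eq0; apply: contraT => dn0.
have /andP[_ wtc_le] := wt_in c cC cn0.
have /andP[wtd_ge _] := wt_in (c - c') (memvB cC c'C) dn0.
have /andP[wtc'_ge _] := wt_in c' c'C c'n0.
have : (w < wt c)%N.
  by rewrite (wt_suppD sc'c); apply: leq_trans lt_w_2d _; rewrite -addnn leq_add.
by rewrite ltnNge wtc_le.
Qed.

End BinaryCodes.

Section Delta.
Variable m : nat.
Implicit Types (L : {set 'I_m}) (a b u : 'rV['F_2]_m).

Lemma Delta0 L : 0 \in Delta L.
Proof. by rewrite inE; apply/subsetP => i; rewrite inE mxE eqxx. Qed.

Lemma DeltaD L a b : a \in Delta L -> b \in Delta L -> a + b \in Delta L.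
Proof.
rewrite !inE => /subsetP aL /subsetP bL; apply/subsetP => i; rewrite inE mxE => abi.
have [ai0|ai] := eqVneq (a 0 i) 0; [apply: bL | apply: aL]; rewrite inE //.
by rewrite ai0 add0r in abi.
Qed.

Lemma Delta_set0 a : (a \in Delta set0) = (a == 0).
Proof. by rewrite inE subset0 -cards_eq0 -/(wt a) wt_eq0. Qed.

Lemma card_Delta L : #|Delta L| = (2 ^ #|L|)%N.
Proof.
pose f (w : 'rV['F_2]_m) := [ffun i => w 0 i].
have f_inj : injective f by move=> w1 w2 /ffunP fw; apply/rowP => i; have := fw i; rewrite !ffunE.
rewrite -(card_imset _ f_inj).
transitivity #|pffun_on (0 : 'F_2) L predT|.
  2: by rewrite card_pffun_on; congr (_ ^ _)%N; exact: card_Fp.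
apply: eq_card => g.
apply/imsetP/pffun_onP => [[w + ->]|[/subsetP gL _]].
  rewrite inE => /subsetP wL; split=> // ; apply/subsetP => i; rewrite inE ffunE => wi.
  by apply: wL; rewrite inE.
exists (\row_i g i); last by apply/ffunP => i; rewrite !ffunE mxE.
by rewrite inE; apply/subsetP => i; rewrite inE mxE => gi; apply: gL.
Qed.

Lemma dotvDr u a b : dotv u (a + b) = dotv u a + dotv u b.
Proof. by rewrite /dotv -big_split; apply: eq_bigr => i _; rewrite mxE mulrDr. Qed.

Lemma dotvBl u v a : dotv (u - v) a = dotv u a - dotv v a.
Proof. by rewrite /dotv -sumrB; apply: eq_bigr => i _; rewrite !mxE mulrBl. Qed.

Lemma dotv_delta u j : dotv u (delta_mx 0 j) = u 0 j.
Proof.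
rewrite /dotv (bigD1 j) //= big1 => [|i /negbTE ij]; first by rewrite mxE !eqxx mulr1 addr0.
by rewrite mxE ij andbF mulr0.
Qed.

Lemma dotv_Delta_eq0 L u : (forall a, a \in Delta L -> dotv u a = 0) <-> u \in Delta (~: L).
Proof.
split=> [uL|]; last first.
  rewrite inE => /subsetP uL a; rewrite inE => /subsetP aL; rewrite /dotv big1 // => i _.
  have [ui0|ui1] := eqVneq (u 0 i) 0; first by rewrite ui0 mul0r.
  have [ai0|ai1] := eqVneq (a 0 i) 0; first by rewrite ai0 mulr0.
  by move: (uL i); rewrite !inE (aL i) ?inE // => /(_ ui1).
rewrite inE; apply/subsetP => i; rewrite !inE; apply: contraNN => iL.
rewrite -dotv_delta uL ?inE ?eqxx //; apply/subsetP => j; rewrite !inE mxE.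
by have [->|] := eqVneq j i; rewrite ?andbF ?eqxx.
Qed.

End Delta.

(* The set D^(2) of the paper, in the coordinates ((a, c), b) of [Dc2]; see [Dc2E]. *)
Definition D2 m (L M N : {set 'I_m}) : {set triple m} :=
  setX (setX (Delta L) (Delta N)) (Delta M).

Section Triples.
Variable m : nat.
Implicit Types (L M N : {set 'I_m}) (u v x y : triple m).

Lemma card_triple : #|{: triple m}| = (2 ^ (3 * m))%N.
Proof. by rewrite !card_prod !card_mx card_Fp // mul1n -!expnD; congr (_ ^ _)%N; lia. Qed.

Lemma card_D2 L M N : #|D2 L M N| = (2 ^ (#|L| + #|M| + #|N|))%N.
Proof. by rewrite !cardsX !card_Delta -!expnD; congr (_ ^ _)%N; lia. Qed.

Lemma in_D2 L M N x :
  (x \in D2 L M N) = [&& x.1.1 \in Delta L, x.1.2 \in Delta N & x.2 \in Delta M].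
Proof. by case: x => [[a c] b]; rewrite !in_setX andbA. Qed.

Lemma card_D2C L M N : #|D2 (~: L) (~: M) (~: N)| = (2 ^ (3 * m - (#|L| + #|M| + #|N|)))%N.
Proof.
rewrite card_D2; congr (_ ^ _)%N.
by have := cardsC L; have := cardsC M; have := cardsC N; rewrite !card_ord; lia.
Qed.

Lemma D2_addr L M N : {in D2 L M N &, forall x y, x + y \in D2 L M N}.
Proof.
move=> x y; rewrite !in_D2 => /and3P[aL cN bM] /and3P[a'L c'N b'M].
by rewrite !DeltaD.
Qed.

Lemma dot3Dr u x y : dot3 u (x + y) = dot3 u x + dot3 u y.
Proof. by rewrite /dot3 /= !dotvDr; ring. Qed.

Lemma dot3Bl u v x : dot3 (u - v) x = dot3 u x - dot3 v x.
Proof. by rewrite /dot3 /= !dotvBl; ring. Qed.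

Lemma dot3_D2_eq0 L M N u :
  [forall x in D2 L M N, dot3 u x == 0] = (u \in D2 (~: L) (~: M) (~: N)).
Proof.
have dotv0 (w : 'rV['F_2]_m) : dotv w 0 = 0 by rewrite /dotv big1 // => i _; rewrite mxE mulr0.
case: u => [[al be] ga]; rewrite in_D2 /=.
apply/forall_inP/and3P => [uD|[/dotv_Delta_eq0 alL /dotv_Delta_eq0 beN /dotv_Delta_eq0 gaM] x].
  split; apply/dotv_Delta_eq0 => a aX; apply/eqP.
  - by have := uD ((a, 0), 0); rewrite /dot3 /= !dotv0 !addr0 in_D2 aX !Delta0; apply.
  - by have := uD ((0, a), 0); rewrite /dot3 /= !dotv0 add0r addr0 in_D2 aX !Delta0; apply.
  - by have := uD ((0, 0), a); rewrite /dot3 /= !dotv0 !add0r in_D2 aX !Delta0; apply.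
by rewrite in_D2 => /and3P[aL cN bM]; rewrite /dot3 alL ?beN ?gaM // !addr0.
Qed.

Lemma exists_dot3_neq0 u : u != 0 -> [exists x, dot3 u x != 0].
Proof.
apply: contraNT; rewrite negb_exists => /forallP u0.
have : [forall x in D2 setT setT setT, dot3 u x == 0] by apply/forall_inP => x _; exact/negbNE/u0.
rewrite dot3_D2_eq0 in_D2 !setCT !Delta_set0.
by case: u {u0} => [[al be] ga] /= /and3P[/eqP-> /eqP-> /eqP->].
Qed.

Lemma double_card_dot3_neq0_notin_D2 L M N u : u != 0 ->
  #|[set x in ~: D2 L M N | dot3 u x != 0]|.*2 =
  if u \in D2 (~: L) (~: M) (~: N) then (2 ^ (3 * m))%N
  else (2 ^ (3 * m) - 2 ^ (#|L| + #|M| + #|N|))%N.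
Proof.
move=> un0; have [x0 ux0] := existsP (exists_dot3_neq0 un0).
have cardT := double_card_form_neq0 (dot3Dr u) (S := [set: triple m])
  (fun x y _ _ => in_setT (x + y)).
rewrite cardsT card_triple ifT in cardT; last by apply/exists_inP; exists x0; rewrite ?in_setT.
have cardD := double_card_form_neq0 (dot3Dr u) (@D2_addr L M N).
rewrite -negb_forall_in dot3_D2_eq0 card_D2 in cardD.
have splitT := cardsID (D2 L M N) [set x in [set: triple m] | dot3 u x != 0].
have -> : [set x in ~: D2 L M N | dot3 u x != 0] =
          [set x in [set: triple m] | dot3 u x != 0] :\: D2 L M N.
  by apply/setP => x; rewrite !inE andbC.
have DI : [set x in [set: triple m] | dot3 u x != 0] :&: D2 L M N =
          [set x in D2 L M N | dot3 u x != 0].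
  by apply/setP => x; rewrite !inE andbC.
rewrite DI in splitT; move: cardD cardT splitT.
set inD := #|[set x in D2 L M N | _]|; set all := #|[set x in [set: triple m] | _]|.
set outD := #|_ :\: D2 L M N|.
by case: (u \in D2 (~: L) (~: M) (~: N)) => /=; lia.
Qed.

End Triples.

Section F8.
Variables (F : finFieldType) (om : F).
Hypotheses (cardF : #|F| = 8%N) (omE : om ^+ 3 + om + 1 = 0).

Lemma pchar_F8 : 2%N \in [pchar F].
Proof. exact: (@card_finPcharP F 2 3). Qed.

Lemma natr_F2D (x y : 'F_2) : (nat_of_ord (x + y))%:R = x%:R + y%:R :> F.
Proof.
by case: (F2_cases x) => ->; case: (F2_cases y) => ->; rewrite ?addr0 ?add0r //=
  (addrr_pchar2 pchar_F8).
Qed.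

Lemma om_F2_free (a b c : 'F_2) :
  a%:R + om * b%:R + om ^+ 2 * c%:R = 0 :> F -> [/\ a = 0, b = 0 & c = 0].
Proof.
have two0 : 2 = 0 :> F := pcharf0 pchar_F8.
have om3 : om ^+ 3 = om + 1.
  by apply/eqP; rewrite -(oppr_pchar2 pchar_F8 (om + 1)) -subr_eq0 opprK addrA omE.
have unit_neq0 (p q : F) : p * q = 1 -> p != 0.
  by move=> pq; apply/eqP => p0; move: pq; rewrite p0 mul0r => /esym/eqP; rewrite oner_eq0.
move=> p0; suff /and3P[/eqP-> /eqP-> /eqP->] : [&& a == 0, b == 0 & c == 0] by [].
move/eqP: p0; apply: contraTT => abc.
(* Each nonzero a + b om + c om^2 is a unit of F_2[om]; the witnesses are its inverses. *)
case: (F2_cases a) abc => ->; case: (F2_cases b) => ->; case: (F2_cases c) => -> //= _;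
  rewrite ?mulr0n ?mulr1n ?mulr0 ?mulr1 ?addr0 ?add0r.
- by apply: (unit_neq0 _ (1 + om + om ^+ 2)); ring: om3 two0.
- by apply: (unit_neq0 _ (1 + om ^+ 2)); ring: om3 two0.
- by apply: (unit_neq0 _ (1 + om)); ring: om3 two0.
- exact: oner_neq0.
- by apply: (unit_neq0 _ om); ring: om3 two0.
- by apply: (unit_neq0 _ (om + om ^+ 2)); ring: om3 two0.
- by apply: (unit_neq0 _ (om ^+ 2)); ring: om3 two0.
Qed.

Lemma embF_comb_inj m (a b c a' b' c' : 'rV['F_2]_m) :
  embF F a + om *: embF F b + om ^+ 2 *: embF F c =
  embF F a' + om *: embF F b' + om ^+ 2 *: embF F c' -> [/\ a = a', b = b' & c = c'].
Proof.
move/rowP => E.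
have sum_eq0 i : [/\ a 0 i + a' 0 i = 0, b 0 i + b' 0 i = 0 & c 0 i + c' 0 i = 0].
  apply: om_F2_free; rewrite !natr_F2D.
  have := E i; rewrite !mxE => /eqP; rewrite -subr_eq0 => /eqP <-.
  by rewrite (GRing.subr_pchar2 pchar_F8); ring.
have F2_add_eq0 (x y : 'F_2) : x + y = 0 -> x = y.
  by move/eqP; rewrite -(GRing.subr_pchar2 pchar_F2) subr_eq0 => /eqP.
by split; apply/rowP => i; have [? ? ?] := sum_eq0 i; exact: F2_add_eq0.
Qed.

Lemma in_Dset m (L M N : {set 'I_m}) (a b c : 'rV['F_2]_m) :
  (embF F a + om *: embF F b + om ^+ 2 *: embF F c \in Dset om L M N) =
  [&& a \in Delta L, b \in Delta M & c \in Delta N].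
Proof.
rewrite inE; apply/existsP/and3P => [[a' /andP[a'L /existsP[b' /andP[b'M]]]]|[aL bM cN]].
  by case/existsP=> c' /andP[c'N /eqP/embF_comb_inj[-> -> ->]].
exists a; rewrite aL; apply/existsP; exists b; rewrite bM.
by apply/existsP; exists c; rewrite cN /=.
Qed.

Lemma Dc2E m (L M N : {set 'I_m}) : Dc2 om L M N = ~: D2 L M N.
Proof.
by apply/setP => x; rewrite in_setC in_set in_Dset in_D2 (andbC (x.2 \in _)).
Qed.

End F8.

Section SubfieldCode.
Variables (F : finFieldType) (om : F).
Hypotheses (cardF : #|F| = 8%N) (omE : om ^+ 3 + om + 1 = 0).
Variables (m : nat) (L M N : {set 'I_m}).
Local Notation s := (#|L| + #|M| + #|N|)%N.
Local Notation f := (cwD2 om L M N).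
Local Notation C := (CD2 om L M N).
Local Notation Q := (D2 (~: L) (~: M) (~: N)).

Lemma card_Dc2 : #|Dc2 om L M N| = (2 ^ (3 * m) - 2 ^ s)%N.
Proof. by rewrite Dc2E // cardsCs setCK card_triple card_D2. Qed.

Lemma cwD2B u v : f (u - v) = f u - f v.
Proof. by apply/rowP => i; rewrite !mxE dot3Bl. Qed.

HB.instance Definition _ := GRing.isZmodMorphism.Build _ _ f cwD2B.

Lemma mem_CD2 c : reflect (exists u, c = f u) (c \in C).
Proof.
apply: (iffP idP) => [cC|[u ->]]; last by apply/memv_span/map_f/mem_enum.
rewrite (coord_span cC); apply: (big_ind (fun w => exists u, w = f u)).
- by exists 0; rewrite raddf0.
- by move=> _ _ [u ->] [v ->]; exists (u + v); rewrite raddfD.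
move=> i _; set X := image_tuple _ _; rewrite -tnth_nth.
have /imageP[u _ ->] := mem_tnth i X.
case: (F2_cases (coord X i c)) => ->; first by exists 0; rewrite scale0r raddf0.
by exists u; rewrite scale1r.
Qed.

Lemma wt_cwD2 u : wt (f u) = #|[set x in Dc2 om L M N | dot3 u x != 0]|.
Proof.
rewrite /wt /supp -!sum1dep_card big_mkcond [RHS]big_mkcond /=.
under eq_bigr => i _ do rewrite /cwD2 mxE.
rewrite -(big_enum_val (fun x => if dot3 u x != 0 then 1%N else 0%N)) big_mkcond.
by apply: eq_bigr => x _; case: (x \in _).
Qed.

Hypotheses (s_gt0 : (0 < s)%N) (s_lt : (s < 3 * m)%N).
Local Notation W := (2 ^ (3 * m - 1))%N.
Local Notation d := (2 ^ (3 * m - 1) - 2 ^ (s - 1))%N.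

Lemma expn3m_double : (2 ^ (3 * m))%N = W.*2.
Proof. by rewrite -mul2n -expnS; congr (_ ^ _)%N; lia. Qed.

Lemma expns_double : (2 ^ s)%N = (2 ^ (s - 1)).*2.
Proof. by rewrite -mul2n -expnS; congr (_ ^ _)%N; lia. Qed.

Lemma expns_le_W : (2 ^ s <= W)%N.
Proof. by rewrite leq_exp2l //; lia. Qed.

Lemma d_gt0 : (0 < d)%N.
Proof. by have := expn_gt0 2 (s - 1); have := expns_le_W; rewrite expns_double; lia. Qed.

Lemma d_lt_W : (d < W)%N.
Proof. by have := expn_gt0 2 (s - 1); have := expns_le_W; rewrite expns_double; lia. Qed.

Lemma wt_cwD2E u : wt (f u) = if u == 0 then 0%N else if u \in Q then W else d.
Proof.
have [->|un0] := eqVneq u 0; first by rewrite raddf0 wt0.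
apply: double_inj; have := double_card_dot3_neq0_notin_D2 L M N un0.
rewrite -(Dc2E cardF omE) -wt_cwD2 expn3m_double expns_double => ->.
by case: ifP; rewrite ?doubleB.
Qed.

Lemma cwD2_inj : injective f.
Proof.
move=> u v fuv; apply/eqP; rewrite -subr_eq0; apply: contraT => uv0.
have := wt_cwD2E (u - v); rewrite cwD2B fuv subrr wt0 (negbTE uv0).
by have := d_gt0; have := d_lt_W; case: ifP; lia.
Qed.

Lemma dim_CD2 : \dim C = (3 * m)%N.
Proof.
have : #|C| = #|{: triple m}|.
  rewrite -[RHS](card_imset _ cwD2_inj); apply: eq_card => c.
  by apply/mem_CD2/imsetP => -[u]; [exists u | move=> _ ->; exists u].
by rewrite card_vspace_F2 card_triple => /eqP; rewrite eqn_exp2l // => /eqP.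
Qed.

Lemma num_wt_CD2 w : num_wt C w = #|[set u | wt (f u) == w]|.
Proof.
rewrite /num_wt -(card_imset _ cwD2_inj); apply: eq_card => c; rewrite inE.
apply/andP/imsetP => [[/mem_CD2[u ->] wu]|[u + ->]]; first by exists u; rewrite ?inE.
by rewrite inE => wu; split=> //; apply/mem_CD2; exists u.
Qed.

Lemma num_wt_CD2_0 : num_wt C 0 = 1%N.
Proof.
rewrite num_wt_CD2 (_ : [set u | _] = [set 0]) ?cards1 //.
apply/setP => u; rewrite !inE wt_cwD2E.
by case: (eqVneq u 0) => //= _; case: ifP => _; rewrite gtn_eqF ?d_gt0 ?(ltn_trans d_gt0 d_lt_W).
Qed.

Lemma num_wt_CD2_d : num_wt C d = (2 ^ (3 * m - s) * (2 ^ s - 1))%N.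
Proof.
rewrite num_wt_CD2 (_ : [set u | _] = ~: Q); last first.
  apply/setP => u; rewrite in_set in_setC wt_cwD2E.
  case: (eqVneq u 0) => [->|_] /=; first by rewrite in_D2 !Delta0 ltn_eqF // d_gt0.
  by case: ifP => _; rewrite ?eqxx // gtn_eqF // d_lt_W.
rewrite cardsCs setCK card_triple card_D2C mulnBr muln1 -expnD subnK //; lia.
Qed.

Lemma num_wt_CD2_W : num_wt C W = (2 ^ (3 * m - s) - 1)%N.
Proof.
rewrite num_wt_CD2 (_ : [set u | _] = Q :\ 0); last first.
  apply/setP => u; rewrite in_set in_setD1 wt_cwD2E.
  case: (eqVneq u 0) => /= _; first by rewrite (ltn_eqF (ltn_trans d_gt0 d_lt_W)).
  by case: ifP => _; rewrite ?eqxx // (ltn_eqF d_lt_W).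
by have := cardsD1 0 Q; rewrite in_D2 !Delta0 card_D2C add1n => ->; rewrite subn1.
Qed.

Lemma wt_CD2 c : c \in C -> c != 0 -> wt c = W \/ wt c = d.
Proof.
move=> /mem_CD2[u ->]; rewrite wt_cwD2E.
case: (eqVneq u 0) => [-> /eqP[]|_ _]; first exact: raddf0.
by case: ifP; [left|right].
Qed.

Lemma min_dist_CD2 : min_dist_is C d.
Proof.
split=> [|c cC cn0]; last by have := d_lt_W; case: (wt_CD2 cC cn0) => ->; lia.
apply: exists_num_wt_gt0; first exact: d_gt0.
rewrite num_wt_CD2_d muln_gt0 expn_gt0 subn_gt0 -(expn0 2) ltn_exp2l //.
Qed.

Lemma two_weight_CD2 : two_weight C.
Proof.
exists d, W; split; first by apply/eqP; rewrite ltn_eqF ?d_lt_W.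
split; first by case: min_dist_CD2.
split; last by move=> c cC cn0; case: (wt_CD2 cC cn0); [right|left].
apply: exists_num_wt_gt0; first exact: expn_gt0.
by rewrite num_wt_CD2_W subn_gt0 -(expn0 2) ltn_exp2l //; lia.
Qed.

Lemma griesmer_CD2 : griesmer C.
Proof.
exists d; split; first exact: min_dist_CD2.
by rewrite dim_CD2 (@card_Fp 2) // card_Dc2 sum_ceil_div_exp2 // s_gt0.
Qed.

Lemma distance_optimal_CD2 : distance_optimal C.
Proof.
exists d; split; first by split; [|exact: min_dist_CD2].
case=> C' [dimC' [_ wtC']]; have := plotkin_bound wtC'.
rewrite dimC' dim_CD2 card_Dc2 expn3m_double expns_double.
have := expns_le_W; have := expn_gt0 2 (s - 1); rewrite expns_double.
set S := (2 ^ (s - 1))%N; set w := W; nia.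
Qed.

Lemma minimal_code_CD2 : (s <= 3 * m - 2)%N -> minimal_code C.
Proof.
move=> s_le; apply: (minimal_code_wt_bounds (d := d) (w := W)) => [c cC cn0|].
  by case: (wt_CD2 cC cn0) => ->; rewrite leqnn (ltnW d_lt_W).
have : (2 ^ s < W)%N by rewrite ltn_exp2l //; lia.
by rewrite doubleB -expns_double; lia.
Qed.

End SubfieldCode.

Lemma card_sets_bounds m (L M N : {set 'I_m}) :
  L != set0 -> [|| L != setT, M != setT | N != setT] ->
  (0 < #|L| + #|M| + #|N| < 3 * m)%N.
Proof.
rewrite -card_gt0 => L_gt0 proper.
have le_m (A : {set 'I_m}) : (#|A| <= m)%N.
  by rewrite -[X in (_ <= X)%N](card_ord m) max_card.
have lt_m (A : {set 'I_m}) : A != setT -> (#|A| < m)%N.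
  by rewrite -properT => /proper_card; rewrite cardsT card_ord.
by case/or3P: proper => /lt_m; have := le_m L; have := le_m M; have := le_m N; lia.
Qed.

Theorem mainTheorem10 (F : finFieldType) (om : F) :
  #|F| = 8%N -> om ^+ 3 + om + 1 = 0 ->
  forall (m : nat) (L M N : {set 'I_m}),
    L != set0 -> M != set0 -> N != set0 ->
    [|| L != setT, M != setT | N != setT] ->
    let s := (#|L| + #|M| + #|N|)%N in
    let C := CD2 om L M N in
    [/\ #|Dc2 om L M N| = (2 ^ (3 * m) - 2 ^ s)%N,
        is_nkd_code (3 * m) (2 ^ (3 * m - 1) - 2 ^ (s - 1)) C,
        two_weight C,
        [/\ num_wt C 0 = 1%N,
            num_wt C (2 ^ (3 * m - 1) - 2 ^ (s - 1)) = (2 ^ (3 * m - s) * (2 ^ s - 1))%N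
          & num_wt C (2 ^ (3 * m - 1)) = (2 ^ (3 * m - s) - 1)%N]
      & [/\ griesmer C, distance_optimal C
          & (s <= 3 * m - 2)%N -> minimal_code C]].
Proof.
move=> cardF omE m L M N L0 _ _ proper s C.
have /andP[s_gt0 s_lt] := card_sets_bounds L0 proper.
split.
- by apply: card_Dc2.
- by split; [apply: dim_CD2 | apply: min_dist_CD2].
- by apply: two_weight_CD2.
- by split; [apply: num_wt_CD2_0 | apply: num_wt_CD2_d | apply: num_wt_CD2_W].
- by split; [apply: griesmer_CD2 | apply: distance_optimal_CD2 | apply: minimal_code_CD2].
Qed.
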